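(* Let $(A;R)\in\mathcal C$ and work in $PG(A;R)$. Let $A_1,A_2,C$ be closed sets with $d(A_1\cup A_2)=d(A_1)+d(A_2)-d(A_1\cap A_2)$. Then $$d((A_1\cap C)\cup(A_2\cap C))=d(A_1\cap C)+d(A_2\cap C)-d(A_1\cap A_2\cap C).$$
   Context: A set system is a pair $(A;R)$ where $R$ is a set of finite non-empty subsets of $A$; for $X\subseteq A$, $R[X]=\{r\in R:r\subseteq X\}$ and $\delta(X)=|X|-|R[X]|$. $\mathcal C$ is the class of finite set systems with $\delta(X)\ge0$ for all $X\subseteq A$. $d(X)=\min\{\delta(Y):X\subseteq Y\subseteq A\}$, $\mathrm{cl}(X)=\{y:d(X\cup\{y\})=d(X)\}$, and $PG(A;R)$ is the matroid $(A,\mathrm{cl})$ with rank function $d$; closed sets are $F$ with $\mathrm{cl}(F)=F$. *)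

From HB Require Import structures.
From mathcomp Require Import all_boot all_order all_algebra.
Set Implicit Arguments. Unset Strict Implicit. Unset Printing Implicit Defensive.
Import Order.TTheory GRing.Theory Num.Theory.
Local Open Scope ring_scope.

Definition set_system (A : finType) (R : {set {set A}}) : Prop :=
  forall r, r \in R -> r != set0.

Definition RX (A : finType) (R : {set {set A}}) (X : {set A}) : {set {set A}} :=
  [set r in R | r \subset X].

Definition delta (A : finType) (R : {set {set A}}) (X : {set A}) : int :=
  (#|X|%:Z - #|RX R X|%:Z).

Definition in_C (A : finType) (R : {set {set A}}) : Prop :=
  set_system R /\ forall X : {set A}, 0 <= delta R X.

(* d(X) = min { delta(Y) : X ⊆ Y ⊆ A }  (the set is nonempty: Y = A) *)
Definition dd (A : finType) (R : {set {set A}}) (X : {set A}) : int :=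
  \big[Num.min/delta R [set: A]]_(Y : {set A} | X \subset Y) delta R Y.

Definition cl (A : finType) (R : {set {set A}}) (X : {set A}) : {set A} :=
  [set y | dd R (y |: X) == dd R X].

Definition is_closed (A : finType) (R : {set {set A}}) (F : {set A}) : Prop :=
  cl R F = F.

From HB Require Import structures.
From mathcomp Require Import all_boot all_order all_algebra.
From mathcomp Require Import zify.
Set Implicit Arguments. Unset Strict Implicit. Unset Printing Implicit Defensive.
Import Order.TTheory GRing.Theory Num.Theory.
Local Open Scope ring_scope.

(* Call X self-sufficient when delta(X) <= delta(W) for every W containing X;
   equivalently d(X) = delta(X).  Closed sets are self-sufficient, and so are
   intersections of self-sufficient sets.
   For any X, Y the counting identity
     delta(X u Y) + delta(X n Y) = delta(X) + delta(Y) - e(X,Y),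
   holds, where e(X,Y) = |R[X u Y]| - |R[X] u R[Y]| >= 0 counts the relations
   of X u Y lying neither in X nor in Y.  Call the union free when e(X,Y) = 0.
   If X, Y, X n Y are self-sufficient and d is modular on X, Y, then the
   identity together with d(X u Y) <= delta(X u Y) forces e(X,Y) = 0 and
   d(X u Y) = delta(X u Y).  Freeness passes to the traces X n C, Y n C, and
   (X u Y) n C is again self-sufficient; the identity with e = 0 then gives
   modularity of d on the traces.  The theorem applies this with X = A1,
   Y = A2 and the closed set C. *)

Section SelfSufficient.
Variables (A : finType) (R : {set {set A}}).

Lemma dd_le {X Y : {set A}} : X \subset Y -> dd R X <= delta R Y.
Proof. by move=> sXY; rewrite /dd (bigD1 Y sXY) /= ge_min lexx. Qed.

Lemma dd_attained (X : {set A}) :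
  exists2 Y : {set A}, X \subset Y & dd R X = delta R Y.
Proof.
rewrite /dd; apply: (big_ind (fun m => exists2 Y : {set A}, X \subset Y & m = delta R Y)).
- by exists [set: A]; rewrite ?subsetT.
- move=> _ _ [Y1 sY1 ->] [Y2 sY2 ->].
  by case: (leP (delta R Y1) (delta R Y2)) => _; [exists Y1 | exists Y2].
- by move=> Y sXY; exists Y.
Qed.

Lemma dd_mono {X Y : {set A}} : X \subset Y -> dd R X <= dd R Y.
Proof.
move=> sXY; have [Z sYZ ->] := dd_attained Y.
by apply: dd_le; apply: subset_trans sYZ.
Qed.

Definition self_sufficient (X : {set A}) : Prop :=
  forall W : {set A}, X \subset W -> delta R X <= delta R W.

Lemma self_sufficientE (X : {set A}) : self_sufficient X <-> dd R X = delta R X.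
Proof.
split=> [ssX | ddX W sXW]; last by rewrite -ddX dd_le.
apply/eqP; rewrite eq_le dd_le //=.
by have [Y sXY ->] := dd_attained X; apply: ssX.
Qed.

(* A closed set equals the minimiser Y of d(F) = delta(Y): every point of Y
   leaves d unchanged when added to F, hence lies in cl(F) = F. *)
Lemma closed_self_sufficient (F : {set A}) :
  is_closed R F -> self_sufficient F.
Proof.
move=> clF; have [Y sFY ddF] := dd_attained F.
have sYF : Y \subset F.
  apply/subsetP => y yY; rewrite -clF inE; apply/eqP/eqP; rewrite eq_le.
  rewrite (dd_mono (subsetUr [set y] F)) andbT ddF dd_le //.
  by rewrite subUset sub1set yY.
have eFY : F = Y by apply/eqP; rewrite eqEsubset sFY sYF.
by apply/self_sufficientE; rewrite ddF eFY.
Qed.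

Lemma RX_cup_sub (X Y : {set A}) : RX R X :|: RX R Y \subset RX R (X :|: Y).
Proof.
apply/subsetP => r; rewrite !inE => /orP[/andP[-> sX]|/andP[-> sY]] /=.
  exact: subset_trans sX (subsetUl _ _).
exact: subset_trans sY (subsetUr _ _).
Qed.

Lemma RX_cap (X Y : {set A}) : RX R X :&: RX R Y = RX R (X :&: Y).
Proof. by apply/setP => r; rewrite !inE subsetI andbACA andbb. Qed.

Lemma delta_modular_defect (X Y : {set A}) :
  delta R (X :|: Y) + delta R (X :&: Y) =
  delta R X + delta R Y - (#|RX R (X :|: Y)|%:Z - #|RX R X :|: RX R Y|%:Z).
Proof.
have cardX := cardsUI X Y.
have cardRX := cardsUI (RX R X) (RX R Y); rewrite RX_cap in cardRX.
rewrite /delta; lia.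
Qed.

Lemma delta_submodular (X Y : {set A}) :
  delta R (X :|: Y) + delta R (X :&: Y) <= delta R X + delta R Y.
Proof.
have := delta_modular_defect X Y.
have := subset_leq_card (RX_cup_sub X Y); lia.
Qed.

Lemma self_sufficient_I (X Y : {set A}) :
  self_sufficient X -> self_sufficient Y -> self_sufficient (X :&: Y).
Proof.
move=> ssX ssY W sXYW.
(* Trace one factor at a time: delta(W n X) <= delta(W) by submodularity. *)
have traceX := delta_submodular W X; have := ssX _ (subsetUr W X).
have traceY := delta_submodular (W :&: X) Y; have := ssY _ (subsetUr (W :&: X) Y).
have eWXY : W :&: X :&: Y = X :&: Y by rewrite -setIA; apply/setIidPr.
rewrite eWXY in traceY; lia.
Qed.

Definition free_union (X Y : {set A}) : Prop :=
  RX R (X :|: Y) \subset RX R X :|: RX R Y.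

Lemma free_union_trace (X Y C : {set A}) :
  free_union X Y -> free_union (X :&: C) (Y :&: C).
Proof.
move=> freeXY; apply/subsetP => r; rewrite inE -setIUl subsetI => /and3P[rR sXY sC].
have /(subsetP freeXY) : r \in RX R (X :|: Y) by rewrite inE rR.
by rewrite !inE !subsetI rR sC !andbT.
Qed.

Lemma delta_modular_free (X Y : {set A}) : free_union X Y ->
  delta R (X :|: Y) + delta R (X :&: Y) = delta R X + delta R Y.
Proof.
move=> freeXY; have eqRX : RX R (X :|: Y) = RX R X :|: RX R Y.
  by apply/eqP; rewrite eqEsubset freeXY RX_cup_sub.
by rewrite delta_modular_defect eqRX subrr subr0.
Qed.

Lemma modular_free_union (X Y : {set A}) :
  self_sufficient X -> self_sufficient Y -> self_sufficient (X :&: Y) ->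
  dd R (X :|: Y) = dd R X + dd R Y - dd R (X :&: Y) ->
  free_union X Y /\ self_sufficient (X :|: Y).
Proof.
move=> /self_sufficientE ddX /self_sufficientE ddY /self_sufficientE ddXY.
rewrite ddX ddY ddXY => ddU.
have := delta_modular_defect X Y; have := dd_le (subxx (X :|: Y)).
have := subset_leq_card (RX_cup_sub X Y) => leRX defect leU.
split; last by apply/self_sufficientE; lia.
have eq_card : #|RX R X :|: RX R Y| = #|RX R (X :|: Y)| by lia.
have /subset_cardP/(_ (RX_cup_sub X Y)) eqRX := eq_card.
by apply/subsetP => r; rewrite eqRX.
Qed.

Lemma dd_modular_free (X Y : {set A}) :
  self_sufficient X -> self_sufficient Y ->
  self_sufficient (X :&: Y) -> self_sufficient (X :|: Y) ->
  free_union X Y ->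
  dd R (X :|: Y) = dd R X + dd R Y - dd R (X :&: Y).
Proof.
move=> /self_sufficientE -> /self_sufficientE -> /self_sufficientE ->.
move=> /self_sufficientE -> /delta_modular_free; lia.
Qed.

End SelfSufficient.

Theorem lemma6p3 (A : finType) (R : {set {set A}}) (A1 A2 C : {set A}) :
  in_C R ->
  is_closed R A1 -> is_closed R A2 -> is_closed R C ->
  dd R (A1 :|: A2) = dd R A1 + dd R A2 - dd R (A1 :&: A2) ->
  dd R ((A1 :&: C) :|: (A2 :&: C)) =
    dd R (A1 :&: C) + dd R (A2 :&: C) - dd R (A1 :&: A2 :&: C).
Proof.
move=> _ /closed_self_sufficient ss1 /closed_self_sufficient ss2.
move=> /closed_self_sufficient ssC modular12.
have ss12 := self_sufficient_I ss1 ss2.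
have [free12 ssU] := modular_free_union ss1 ss2 ss12 modular12.
have traceI : A1 :&: C :&: (A2 :&: C) = A1 :&: A2 :&: C.
  by rewrite setIACA setIid.
rewrite -traceI; apply: dd_modular_free.
- exact: self_sufficient_I ss1 ssC.
- exact: self_sufficient_I ss2 ssC.
- by rewrite traceI; apply: self_sufficient_I.
- by rewrite -setIUl; apply: self_sufficient_I.
- exact: free_union_trace.
Qed.
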